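(* Let $\mathcal{F}$ be a class of real functions on $\mathcal{X}$ and $(\mathbf{X}_i,Y_i)_{i=1}^n$ a sample. Let $\widehat g_1,\dots,\widehat g_d$ be $\Delta_1$-empirical risk minimizers in $\mathcal{F}$, and let $\widehat f$ be a $\Delta_2$-empirical risk minimizer in $Star_d(\mathcal{F},\widehat g_1,\dots,\widehat g_d)$. Then for any $h\in\mathcal{F}$, with $c=\frac1{36}$, $$\widehat{\mathbb{E}}(h-Y)^2-\widehat{\mathbb{E}}(\widehat f-Y)^2\ge c\,\widehat{\mathbb{E}}(\widehat f-h)^2-2(1+c)[\Delta_1+\Delta_2].$$
   Context: $\widehat{\mathbb{E}}(f)=\frac1n\sum_{i=1}^n f(\mathbf{X}_i)$ (and $\widehat{\mathbb{E}}(f-Y)^2=\frac1n\sum_i(f(\mathbf{X}_i)-Y_i)^2$). $\widehat g\in\mathcal{G}$ is a $\Delta$-empirical risk minimizer in $\mathcal{G}$ if $\widehat{\mathbb{E}}(\widehat g-Y)^2\le\min_{f\in\mathcal{G}}\widehat{\mathbb{E}}(f-Y)^2+\Delta$. $Star_d(\mathcal{F},\widehat g_1,\dots,\widehat g_d)=\{\sum_{i=1}^d\lambda_i\widehat g_i+(1-\sum_i\lambda_i)f:\lambda_i\in[0,1],\ 1-\sum_i\lambda_i\in[0,1],\ f\in\mathcal{F}\}$. *)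

From mathcomp Require Import all_boot all_order all_algebra.
Set Implicit Arguments. Unset Strict Implicit. Unset Printing Implicit Defensive.
Import Order.TTheory GRing.Theory Num.Theory.
Local Open Scope ring_scope.

Definition emp_mean (R : realFieldType) (X : Type) (n : nat)
  (Xs : 'I_n -> X) (f : X -> R) : R :=
  n%:R^-1 * \sum_(i < n) f (Xs i).

Definition emp_risk (R : realFieldType) (X : Type) (n : nat)
  (Xs : 'I_n -> X) (Ys : 'I_n -> R) (f : X -> R) : R :=
  n%:R^-1 * \sum_(i < n) (f (Xs i) - Ys i) ^+ 2.

Definition emp_dist (R : realFieldType) (X : Type) (n : nat)
  (Xs : 'I_n -> X) (f h : X -> R) : R :=
  emp_mean Xs (fun x => (f x - h x) ^+ 2).

Definition is_ERM (R : realFieldType) (X : Type) (n : nat)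
  (Xs : 'I_n -> X) (Ys : 'I_n -> R) (G : (X -> R) -> Prop) (Delta : R)
  (g : X -> R) : Prop :=
  G g /\ forall f, G f -> emp_risk Xs Ys g <= emp_risk Xs Ys f + Delta.

Definition Star (R : realFieldType) (X : Type) (d : nat)
  (F : (X -> R) -> Prop) (g : 'I_d -> X -> R) : (X -> R) -> Prop :=
  fun u => exists (lam : 'I_d -> R) (f : X -> R),
    (forall i, 0 <= lam i <= 1) /\
    0 <= 1 - \sum_(i < d) lam i <= 1 /\
    F f /\
    u = (fun x => \sum_(i < d) lam i * g i x + (1 - \sum_(i < d) lam i) * f x).

(* Measure everything in the empirical L2 seminorm of residuals.  The midpoints
   of g_1 with h and of g_1 with f lie in the star hull, so the ERM property of
   f combined with the parallelogram law bounds |g_1 - h|^2 and |g_1 - f|^2 by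
   the excess risk R(h) - R(f) plus slack (g_1 is almost as good as h).  The
   inequality |f - h|^2 <= 2|f - g_1|^2 + 2|g_1 - h|^2 then controls |f - h|^2
   by 12 (R(h) - R(f)) plus slack, and c = 1/36 leaves room for the case of a
   negative excess risk. *)
From mathcomp Require Import all_boot all_order all_algebra.
From mathcomp Require Import ring lra.
Set Implicit Arguments. Unset Strict Implicit. Unset Printing Implicit Defensive.
Import Order.TTheory GRing.Theory Num.Theory.
Local Open Scope ring_scope.

Section MeanSquare.

Variables (R : realFieldType) (n : nat).

Definition mean_sq (u : 'I_n -> R) : R := n%:R^-1 * \sum_(i < n) u i ^+ 2.

Lemma mean_sq_ge0 (u : 'I_n -> R) : 0 <= mean_sq u.
Proof.
by rewrite mulr_ge0 ?invr_ge0 ?ler0n ?sumr_ge0 // => i _; apply: sqr_ge0.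
Qed.

Lemma eq_mean_sq (u v : 'I_n -> R) : u =1 v -> mean_sq u = mean_sq v.
Proof. by move=> uv; rewrite /mean_sq; under eq_bigr => i _ do rewrite uv. Qed.

Lemma mean_sqZ (k : R) (u : 'I_n -> R) :
  mean_sq (fun i => k * u i) = k ^+ 2 * mean_sq u.
Proof.
rewrite /mean_sq mulrCA; congr (_ * _); rewrite mulr_sumr.
by apply: eq_bigr => i _; rewrite exprMn.
Qed.

Lemma mean_sqN (u : 'I_n -> R) : mean_sq (fun i => - u i) = mean_sq u.
Proof. by rewrite /mean_sq; under eq_bigr => i _ do rewrite sqrrN. Qed.

Lemma mean_sq_parallelogram (u v : 'I_n -> R) :
  mean_sq (fun i => u i + v i) + mean_sq (fun i => u i - v i) =
  2 * mean_sq u + 2 * mean_sq v.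
Proof.
rewrite /mean_sq -mulrDr -big_split /=.
rewrite (eq_bigr (fun i => 2 * u i ^+ 2 + 2 * v i ^+ 2)) => [|i _]; last by ring.
by rewrite big_split /= -!mulr_sumr; ring.
Qed.

Lemma mean_sq_add_le (u v : 'I_n -> R) :
  mean_sq (fun i => u i + v i) <= 2 * mean_sq u + 2 * mean_sq v.
Proof.
rewrite -mean_sq_parallelogram lerDl; exact: mean_sq_ge0.
Qed.

End MeanSquare.

Section EmpiricalRisk.

Variables (R : realFieldType) (X : Type) (n : nat) (Xs : 'I_n -> X) (Ys : 'I_n -> R).

Lemma emp_risk_mean_sq (f : X -> R) :
  emp_risk Xs Ys f = mean_sq (fun i => f (Xs i) - Ys i).
Proof. by []. Qed.

Lemma emp_dist_mean_sq (f h : X -> R) :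
  emp_dist Xs f h = mean_sq (fun i => f (Xs i) - h (Xs i)).
Proof. by []. Qed.

Lemma emp_dist_ge0 (f h : X -> R) : 0 <= emp_dist Xs f h.
Proof. exact: mean_sq_ge0. Qed.

Lemma emp_distC (f h : X -> R) : emp_dist Xs f h = emp_dist Xs h f.
Proof.
by rewrite !emp_dist_mean_sq -mean_sqN; apply: eq_mean_sq => i /=; rewrite opprB.
Qed.

Lemma emp_dist_le (f u h : X -> R) :
  emp_dist Xs f h <= 2 * emp_dist Xs f u + 2 * emp_dist Xs u h.
Proof.
rewrite emp_dist_mean_sq (eq_mean_sq (v := fun i =>
  (f (Xs i) - u (Xs i)) + (u (Xs i) - h (Xs i)))); first exact: mean_sq_add_le.
by move=> i /=; ring.
Qed.

Lemma eq_emp_risk (f f' : X -> R) : f =1 f' -> emp_risk Xs Ys f = emp_risk Xs Ys f'.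
Proof. by move=> ff'; apply: eq_mean_sq => i; rewrite ff'. Qed.

Lemma emp_risk_midpoint (f u : X -> R) :
  emp_risk Xs Ys (fun x => 2^-1 * f x + 2^-1 * u x) =
  2^-1 * (emp_risk Xs Ys f + emp_risk Xs Ys u) - 4^-1 * emp_dist Xs f u.
Proof.
set rf := fun i => f (Xs i) - Ys i; set ru := fun i => u (Xs i) - Ys i.
have -> : emp_risk Xs Ys (fun x => 2^-1 * f x + 2^-1 * u x) =
          mean_sq (fun i => 2^-1 * (rf i + ru i)).
  by apply: eq_mean_sq => i; rewrite /rf /ru; field.
have -> : emp_dist Xs f u = mean_sq (fun i => rf i - ru i).
  by apply: eq_mean_sq => i; rewrite /rf /ru; ring.
rewrite mean_sqZ !emp_risk_mean_sq -/rf -/ru.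
have -> : mean_sq (fun i => rf i + ru i) =
          2 * mean_sq rf + 2 * mean_sq ru - mean_sq (fun i => rf i - ru i).
  by rewrite -mean_sq_parallelogram addrK.
by field.
Qed.

Lemma is_ERM_ge0 (G : (X -> R) -> Prop) (Delta : R) (g : X -> R) :
  is_ERM Xs Ys G Delta g -> 0 <= Delta.
Proof. by case=> Gg /(_ g Gg); rewrite lerDl. Qed.

End EmpiricalRisk.

Section StarHull.

Variables (R : realFieldType) (X : Type) (d : nat).
Variables (F : (X -> R) -> Prop) (g : 'I_d -> X -> R).

(* [Star] is defined through an equality of functions; the lemmas below only
   produce pointwise equal members, which is all the empirical risk can see, so
   no functional extensionality is needed. *)
Lemma Star_of_class (f : X -> R) : F f -> exists2 v, Star F g v & v =1 f.
Proof.
move=> Ff; have sum0 : \sum_(i < d) (0 : R) = 0 by rewrite big1.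
exists (fun x => \sum_(i < d) 0 * g i x + (1 - \sum_(i < d) 0) * f x).
  exists (fun=> 0), f; rewrite sum0 subr0; split; [|split; [|split]] => //.
  - by move=> i; rewrite lexx ler01.
  - by rewrite ler01 lexx.
by move=> x; rewrite big1 ?sum0 ?subr0 ?mul1r ?add0r // => i _; rewrite mul0r.
Qed.

Lemma Star_midpoint (i0 : 'I_d) (u : X -> R) :
  Star F g u -> exists2 v, Star F g v & v =1 (fun x => 2^-1 * g i0 x + 2^-1 * u x).
Proof.
case=> lam [f [lam01 [sum01 [Ff ->]]]].
pose lam2 i := 2^-1 * lam i + (if i == i0 then 2^-1 else 0).
have pick0 (G : 'I_d -> R) : \sum_(i < d) (if i == i0 then G i else 0) = G i0.
  by rewrite -big_mkcond big_pred1_eq.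
have sum_lam2 : \sum_(i < d) lam2 i = 2^-1 * \sum_(i < d) lam i + 2^-1.
  by rewrite big_split /= -mulr_sumr (pick0 (fun=> 2^-1)).
exists (fun x => \sum_(i < d) lam2 i * g i x + (1 - \sum_(i < d) lam2 i) * f x).
  exists lam2, f; split; [|split; [|split]] => //.
  - by move=> i; have := lam01 i; rewrite /lam2; case: (i == i0); lra.
  - by rewrite sum_lam2; lra.
move=> x /=; rewrite sum_lam2.
have -> : \sum_(i < d) lam2 i * g i x =
          2^-1 * \sum_(i < d) lam i * g i x + 2^-1 * g i0 x.
  rewrite -(pick0 (fun i => 2^-1 * g i x)) mulr_sumr -big_split /=.
  by apply: eq_bigr => i _; rewrite /lam2; case: (i == i0); ring.
by field.
Qed.

Variables (n : nat) (Xs : 'I_n -> X) (Ys : 'I_n -> R).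

Lemma is_ERM_Star_midpoint (i : 'I_d) (Delta : R) (f u v : X -> R) :
  is_ERM Xs Ys (Star F g) Delta f -> Star F g v -> v =1 u ->
  emp_risk Xs Ys f <=
    2^-1 * (emp_risk Xs Ys (g i) + emp_risk Xs Ys u) - 4^-1 * emp_dist Xs (g i) u
    + Delta.
Proof.
move=> [_ ERMf] /(Star_midpoint i) [w /ERMf Sw w_mid] vu.
rewrite -emp_risk_midpoint.
rewrite -(eq_emp_risk Xs Ys (f := w) (f' := fun x => 2^-1 * g i x + 2^-1 * u x)) //.
by move=> x; rewrite w_mid vu.
Qed.

End StarHull.

Theorem lemma2 (R : realFieldType) (X : Type) (F : (X -> R) -> Prop)
  (n : nat) (Xs : 'I_n -> X) (Ys : 'I_n -> R)
  (d : nat) (Hd : (0 < d)%N) (g : 'I_d -> X -> R) (Delta1 Delta2 : R)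
  (hg : forall i, is_ERM Xs Ys F Delta1 (g i))
  (fhat : X -> R) (hf : is_ERM Xs Ys (Star F g) Delta2 fhat)
  (h : X -> R) (hh : F h) :
  let c : R := 36%:R^-1 in
  emp_risk Xs Ys h - emp_risk Xs Ys fhat >=
    c * emp_dist Xs fhat h - 2%:R * (1 + c) * (Delta1 + Delta2).
Proof.
cbv zeta; pose i0 : 'I_d := Ordinal Hd.
have Delta1_ge0 := is_ERM_ge0 (hg i0); have Delta2_ge0 := is_ERM_ge0 hf.
have g_le_h : emp_risk Xs Ys (g i0) <= emp_risk Xs Ys h + Delta1.
  by case: (hg i0) => _; apply.
have fhat_le_gh : emp_risk Xs Ys fhat <= 2^-1 * (emp_risk Xs Ys (g i0) + emp_risk Xs Ys h)
    - 4^-1 * emp_dist Xs (g i0) h + Delta2.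
  by have [v Sv vh] := Star_of_class g hh; apply: is_ERM_Star_midpoint Sv vh.
have fhat_le_gfhat := is_ERM_Star_midpoint i0 hf hf.1 (frefl fhat).
have := emp_dist_le Xs fhat (g i0) h; rewrite (emp_distC Xs fhat (g i0)).
have := emp_dist_ge0 Xs (g i0) h; have := emp_dist_ge0 Xs (g i0) fhat.
lra.
Qed.
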